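(* Let $p\in(0,1)$, $q=1-p$, and let $X_1$ be a random variable with ${\sf P}(X_1=\sqrt{q/p})=p$, ${\sf P}(X_1=-\sqrt{p/q})=q$. Let $\Phi$ be the standard normal distribution function. Then $$\Delta_1(p):=\sup_{x\in\mathbb R}\big|{\sf P}(X_1<x)-\Phi(x)\big|=\begin{cases}\Phi(\sqrt{p/q})-p,&0<p<\frac12,\\ \Phi(\sqrt{q/p})-q,&\frac12\le p<1.\end{cases}$$ *)

From Stdlib Require Import Reals.
From Coquelicot Require Import Coquelicot.
Open Scope R_scope.

Definition Phi (x : R) : R :=
  RInt_gen (fun t => / sqrt (2 * PI) * exp (- (t ^ 2) / 2))
           (Rbar_locally m_infty) (at_point x).

(* The random variable X_1 takes the value sqrt(q/p) with probability p and
   -sqrt(p/q) with probability q = 1 - p.  Only its law enters the statement;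
   P(X_1 < x) is the sum of the masses of the atoms strictly below x. *)
Definition X1_cdf_lt (p x : R) : R :=
  let q := 1 - p in
  (if Rlt_dec (sqrt (q / p)) x then p else 0)
  + (if Rlt_dec (- sqrt (p / q)) x then q else 0).

Definition Delta1_set (p : R) : R -> Prop :=
  fun y => exists x : R, y = Rabs (X1_cdf_lt p x - Phi x).

From Stdlib Require Import Reals Lra.
From Coquelicot Require Import Coquelicot.
Open Scope R_scope.

(* Write Phi = 1/2 + Phi0 with Phi0 x = (2 pi)^(-1/2) int_0^x exp(-s^2/2) ds.
   Differentiating under the integral sign shows that
   (int_0^x exp(-s^2/2) ds)^2 + 2 int_0^1 exp(-x^2 (1+s^2)/2) / (1+s^2) ds
   is constant, equal to pi/2; this identifies the improper integral defining
   Phi and bounds Phi0 by 1/2.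

   For p < 1/2 put t = sqrt(p/q) < 1: the atoms of X_1 are -t and 1/t, with
   masses q and p = t^2/(1+t^2).  On each interval cut out by the atoms, the
   bound |P(X_1 < x) - Phi x| <= Phi t - p follows from the monotonicity and
   symmetry of Phi and two estimates: p <= 2 Phi t - 1 (from exp u >= 1 + u)
   and Phi(1/t) - Phi t <= q - p (from the Lipschitz constant (2 pi)^(-1/2)
   of Phi when t^2 > 1/3).  The bound is approached as x decreases to -t.
   For p >= 1/2 the law is the mirror image of that case under x -> -x, and
   the bound is attained at the atom x = t. *)

Lemma continuous_of_ex_derive (f : R -> R) x : ex_derive f x -> continuous f x.
Proof. exact (ex_derive_continuous (V := R_NormedModule) f x). Qed.

Lemma exp_le (a b : R) : a <= b -> exp a <= exp b.
Proof. intros [Hab | ->]; [apply Rlt_le, exp_increasing |]; lra. Qed.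

Definition gauss (x : R) : R := exp (- (x ^ 2) / 2).

Definition gauss_int (x : R) : R := RInt gauss 0 x.

Definition gauss_aux_integrand (x s : R) : R :=
  exp (- (x ^ 2 * (1 + s ^ 2)) / 2) / (1 + s ^ 2).

Definition gauss_aux (x : R) : R := RInt (gauss_aux_integrand x) 0 1.

Lemma gauss_pos x : 0 < gauss x.
Proof. apply exp_pos. Qed.

Lemma gauss_le_1 x : gauss x <= 1.
Proof. rewrite <- exp_0. apply exp_le. nra. Qed.

Lemma continuous_gauss x : continuous gauss x.
Proof. apply continuous_of_ex_derive. unfold gauss. auto_derive. exact I. Qed.

Lemma ex_RInt_gauss a b : ex_RInt gauss a b.
Proof. apply (ex_RInt_continuous (V := R_CompleteNormedModule)). intros; apply continuous_gauss. Qed.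

Lemma is_derive_gauss_int x : is_derive gauss_int x (gauss x).
Proof.
  apply is_derive_RInt with 0; [| apply continuous_gauss].
  apply filter_forall. intros y. apply (RInt_correct (V := R_CompleteNormedModule)), ex_RInt_gauss.
Qed.

Lemma gauss_int_increment x y :
  x <= y -> 0 <= gauss_int y - gauss_int x <= y - x.
Proof.
  intros Hxy.
  assert (Chasles : RInt gauss 0 x + RInt gauss x y = RInt gauss 0 y)
    by exact (RInt_Chasles (V := R_CompleteNormedModule) gauss 0 x y
                (ex_RInt_gauss _ _) (ex_RInt_gauss _ _)).
  unfold gauss_int. replace (RInt gauss 0 y - RInt gauss 0 x) with (RInt gauss x y) by lra.
  split.
  - apply RInt_ge_0; [lra | apply ex_RInt_gauss |]. intros; apply Rlt_le, gauss_pos.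
  - apply Rle_trans with (RInt (fun _ => 1) x y).
    + apply RInt_le; [lra | apply ex_RInt_gauss | apply ex_RInt_const |].
      intros; apply gauss_le_1.
    + rewrite RInt_const. unfold scal; simpl; unfold mult; simpl. lra.
Qed.

Lemma gauss_int_opp x : gauss_int (- x) = - gauss_int x.
Proof.
  assert (Lin : RInt (fun s => -1 * gauss (-1 * s + 0)) 0 x = RInt gauss (-1 * 0 + 0) (-1 * x + 0))
    by exact (RInt_comp_lin (V := R_CompleteNormedModule) gauss (-1) 0 0 x (ex_RInt_gauss _ _)).
  assert (Scal : RInt (fun s => -1 * gauss s) 0 x = -1 * RInt gauss 0 x)
    by exact (RInt_scal (V := R_CompleteNormedModule) gauss 0 x (-1) (ex_RInt_gauss _ _)).
  unfold gauss_int.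
  replace (-1 * 0 + 0) with 0 in Lin by ring. replace (-1 * x + 0) with (- x) in Lin by ring.
  rewrite <- Lin, (RInt_ext _ (fun s => -1 * gauss s)), Scal; [ring |].
  intros s _. unfold gauss. do 3 f_equal. ring.
Qed.

Lemma gauss_int_ge_cubic t : 0 <= t -> t - t ^ 3 / 6 <= gauss_int t.
Proof.
  intros Ht.
  assert (Hpoly : is_RInt (fun s => 1 - s ^ 2 / 2) 0 t (t - t ^ 3 / 6)).
  { replace (t - t ^ 3 / 6) with ((t - t ^ 3 / 6) - (0 - 0 ^ 3 / 6)) by field.
    apply (is_RInt_derive (V := R_CompleteNormedModule) (fun s => s - s ^ 3 / 6)).
    - intros. auto_derive; [exact I | field].
    - intros. apply continuous_of_ex_derive. auto_derive. exact I. }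
  rewrite <- (is_RInt_unique _ _ _ _ Hpoly).
  apply RInt_le; [exact Ht | eexists; exact Hpoly | apply ex_RInt_gauss |].
  intros s _. unfold gauss. generalize (exp_ineq1_le (- (s ^ 2) / 2)). lra.
Qed.

Lemma is_derive_gauss_aux_integrand x s :
  is_derive (fun z => gauss_aux_integrand z s) x (- x * exp (- (x ^ 2 * (1 + s ^ 2)) / 2)).
Proof.
  unfold gauss_aux_integrand. auto_derive; [exact I |].
  replace (- (x * (x * 1) * (1 + s * (s * 1))) * / 2) with (- (x ^ 2 * (1 + s ^ 2)) / 2) by field.
  field. nra.
Qed.

Lemma ex_RInt_gauss_aux_integrand x a b : ex_RInt (gauss_aux_integrand x) a b.
Proof.
  apply (ex_RInt_continuous (V := R_CompleteNormedModule)). intros.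
  apply continuous_of_ex_derive. unfold gauss_aux_integrand. auto_derive. nra.
Qed.

Lemma continuity_2d_gauss_aux_derivative x s :
  continuity_2d_pt (fun u v => - u * exp (- (u ^ 2 * (1 + v ^ 2)) / 2)) x s.
Proof.
  apply continuity_2d_pt_ext with (fun u v => - u * exp (u * u * (1 + v * v) * - / 2)).
  { intros; f_equal; f_equal; field. }
  apply continuity_2d_pt_mult.
  { apply continuity_2d_pt_opp, continuity_2d_pt_id1. }
  apply continuity_1d_2d_pt_comp with (f := exp).
  { apply derivable_continuous_pt, derivable_pt_exp. }
  apply continuity_2d_pt_mult; [| apply continuity_2d_pt_const].
  apply continuity_2d_pt_mult.
  - apply continuity_2d_pt_mult; apply continuity_2d_pt_id1.
  - apply continuity_2d_pt_plus; [apply continuity_2d_pt_const |].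
    apply continuity_2d_pt_mult; apply continuity_2d_pt_id2.
Qed.

Lemma gauss_aux_derivative_integral x :
  RInt (fun s => - x * exp (- (x ^ 2 * (1 + s ^ 2)) / 2)) 0 1 = - gauss x * gauss_int x.
Proof.
  assert (Lin : RInt (fun s => x * gauss (x * s + 0)) 0 1 = RInt gauss (x * 0 + 0) (x * 1 + 0))
    by exact (RInt_comp_lin (V := R_CompleteNormedModule) gauss x 0 0 1 (ex_RInt_gauss _ _)).
  assert (Scal : RInt (fun s => - gauss x * (x * gauss (x * s + 0))) 0 1
                 = - gauss x * RInt (fun s => x * gauss (x * s + 0)) 0 1).
  { exact (RInt_scal (V := R_CompleteNormedModule) _ 0 1 (- gauss x)
             (ex_RInt_comp_lin (V := R_NormedModule) gauss x 0 0 1 (ex_RInt_gauss _ _))). }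
  replace (x * 0 + 0) with 0 in Lin by ring. replace (x * 1 + 0) with x in Lin by ring.
  assert (Factor : forall s : R,
             - x * exp (- (x ^ 2 * (1 + s ^ 2)) / 2) = - gauss x * (x * gauss (x * s + 0))).
  { intros s. unfold gauss.
    replace (- (x ^ 2 * (1 + s ^ 2)) / 2) with (- (x ^ 2) / 2 + - ((x * s + 0) ^ 2) / 2) by field.
    rewrite exp_plus. ring. }
  unfold gauss_int. rewrite <- Lin, <- Scal.
  apply RInt_ext. intros s _. apply Factor.
Qed.

Lemma is_derive_gauss_aux x : is_derive gauss_aux x (- gauss x * gauss_int x).
Proof.
  rewrite <- gauss_aux_derivative_integral.
  rewrite (RInt_ext _ (fun s => Derive (fun z => gauss_aux_integrand z s) x)).
  2: { intros s _. symmetry. apply is_derive_unique, is_derive_gauss_aux_integrand. }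
  apply (is_derive_RInt_param gauss_aux_integrand).
  - apply filter_forall. intros y s _. eexists. apply is_derive_gauss_aux_integrand.
  - intros s _. apply continuity_2d_pt_ext with (2 := continuity_2d_gauss_aux_derivative x s).
    intros u v. symmetry. apply is_derive_unique, is_derive_gauss_aux_integrand.
  - apply filter_forall. intros. apply ex_RInt_gauss_aux_integrand.
Qed.

Lemma gauss_aux_0 : gauss_aux 0 = PI / 4.
Proof.
  assert (Integrand : forall s : R, gauss_aux_integrand 0 s = / (1 + s²)).
  { intros s. unfold gauss_aux_integrand, Rsqr.
    replace (- (0 ^ 2 * (1 + s ^ 2)) / 2) with 0 by field.
    rewrite exp_0. field. nra. }
  unfold gauss_aux. rewrite (RInt_ext _ _ _ _ (fun s _ => Integrand s)).
  rewrite (is_RInt_unique _ _ _ (atan 1 - atan 0)), atan_1, atan_0; [lra |].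
  apply (is_RInt_derive (V := R_CompleteNormedModule) atan).
  - intros; apply is_derive_atan.
  - intros. apply continuous_of_ex_derive. auto_derive. unfold Rsqr. nra.
Qed.

Lemma gauss_int_sq_add_aux x : gauss_int x ^ 2 + 2 * gauss_aux x = PI / 2.
Proof.
  set (K y := gauss_int y ^ 2 + 2 * gauss_aux y).
  assert (K_derive : forall y, is_derive K y 0).
  { intros y.
    replace 0 with (INR 2 * gauss y * gauss_int y ^ Nat.pred 2 + 2 * (- gauss y * gauss_int y))
      by (simpl; ring).
    apply (is_derive_plus (K := R_AbsRing) (V := R_NormedModule)).
    - apply is_derive_pow, is_derive_gauss_int.
    - apply is_derive_scal, is_derive_gauss_aux. }
  assert (K0 : K 0 = PI / 2).
  { unfold K, gauss_int. rewrite RInt_point, gauss_aux_0. unfold zero; simpl. lra. }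
  fold (K x). rewrite <- K0.
  destruct (Rtotal_order x 0) as [Hx | [-> | Hx]]; [| reflexivity |].
  - apply (eq_is_derive (V := R_NormedModule)); auto.
  - symmetry. apply (eq_is_derive (V := R_NormedModule)); auto.
Qed.

Lemma gauss_aux_ge_0 x : 0 <= gauss_aux x.
Proof.
  unfold gauss_aux. apply RInt_ge_0; [lra | apply ex_RInt_gauss_aux_integrand |].
  intros s _. unfold gauss_aux_integrand. apply Rle_mult_inv_pos; [apply Rlt_le, exp_pos | nra].
Qed.

Lemma gauss_aux_le_gauss x : gauss_aux x <= gauss x.
Proof.
  unfold gauss_aux. apply Rle_trans with (RInt (fun _ => gauss x) 0 1).
  - apply RInt_le; [lra | apply ex_RInt_gauss_aux_integrand | apply ex_RInt_const |].
    intros s _. unfold gauss_aux_integrand, gauss.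
    assert (Pos : 0 < exp (- (x ^ 2 * (1 + s ^ 2)) / 2)) by apply exp_pos.
    apply Rle_trans with (exp (- (x ^ 2 * (1 + s ^ 2)) / 2)); [| apply exp_le; nra].
    apply (Rle_div_l _ _ (1 + s ^ 2)); nra.
  - rewrite RInt_const. unfold scal; simpl; unfold mult; simpl. lra.
Qed.

Lemma sqrt_2PI_sq : sqrt (2 * PI) * sqrt (2 * PI) = 2 * PI.
Proof. apply sqrt_sqrt. generalize PI2_3_2; lra. Qed.

Lemma sqrt_2PI_bounds : 1 < sqrt (2 * PI) < 3.
Proof.
  assert (Pos : 0 < sqrt (2 * PI)) by (apply sqrt_lt_R0; generalize PI2_3_2; lra).
  generalize sqrt_2PI_sq PI2_3_2 PI_4. nra.
Qed.

Definition Phi0 (x : R) : R := / sqrt (2 * PI) * gauss_int x.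

Lemma Phi0_0 : Phi0 0 = 0.
Proof. unfold Phi0, gauss_int. rewrite RInt_point. unfold zero; simpl. lra. Qed.

Lemma Phi0_sq x : Phi0 x ^ 2 = 1 / 4 - gauss_aux x / PI.
Proof.
  assert (Identity := gauss_int_sq_add_aux x).
  assert (Sq := sqrt_2PI_sq). assert (Bounds := sqrt_2PI_bounds). assert (PIpos := PI_RGT_0).
  unfold Phi0.
  replace ((/ sqrt (2 * PI) * gauss_int x) ^ 2)
    with (gauss_int x ^ 2 / (sqrt (2 * PI) * sqrt (2 * PI))) by (field; lra).
  rewrite Sq. replace (gauss_int x ^ 2) with (PI / 2 - 2 * gauss_aux x) by lra.
  field. lra.
Qed.

Lemma Phi0_le_half x : Phi0 x <= 1 / 2.
Proof.
  assert (Sq := Phi0_sq x). assert (Aux := gauss_aux_ge_0 x). assert (PIpos := PI_RGT_0).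
  assert (0 <= gauss_aux x / PI) by (apply Rle_mult_inv_pos; lra).
  nra.
Qed.

Lemma Phi0_opp x : Phi0 (- x) = - Phi0 x.
Proof. unfold Phi0. rewrite gauss_int_opp. field. generalize sqrt_2PI_bounds; lra. Qed.

Lemma Phi0_increment x y :
  x <= y -> 0 <= Phi0 y - Phi0 x <= (y - x) / sqrt (2 * PI).
Proof.
  intros Hxy. assert (Bounds := sqrt_2PI_bounds).
  destruct (gauss_int_increment x y Hxy) as [Lo Hi].
  unfold Phi0. replace (/ sqrt (2 * PI) * gauss_int y - / sqrt (2 * PI) * gauss_int x)
    with ((gauss_int y - gauss_int x) / sqrt (2 * PI)) by (field; lra).
  split; [apply Rle_mult_inv_pos; lra |].
  apply Rmult_le_compat_r; [apply Rlt_le, Rinv_0_lt_compat |]; lra.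
Qed.

Lemma Phi0_tail y : 0 <= y -> 1 / 2 - Phi0 y <= 2 * gauss y / PI.
Proof.
  intros Hy.
  assert (Nonneg : 0 <= Phi0 y)
    by (generalize (Phi0_increment 0 y Hy); rewrite Phi0_0; lra).
  assert (Sq := Phi0_sq y). assert (Half := Phi0_le_half y).
  assert (Aux := gauss_aux_le_gauss y). assert (PIpos := PI_RGT_0).
  assert ((1 / 2 - Phi0 y) * (1 / 2 + Phi0 y) = gauss_aux y / PI) by nra.
  assert (gauss_aux y / PI <= gauss y / PI)
    by (apply Rmult_le_compat_r; [apply Rlt_le, Rinv_0_lt_compat |]; lra).
  unfold Rdiv in *. nra.
Qed.

Lemma gauss_small eps : 0 < eps -> forall y, y <= - (1 + 2 / eps) -> gauss y < eps.
Proof.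
  intros Heps y Hy.
  assert (Inv : gauss y * exp (y ^ 2 / 2) = 1).
  { unfold gauss. rewrite <- exp_plus, <- exp_0. f_equal. field. }
  assert (Exp := exp_ineq1_le (y ^ 2 / 2)). assert (Pos := gauss_pos y).
  assert (Big : 2 / eps < y ^ 2) by nra.
  assert (1 < eps * exp (y ^ 2 / 2)).
  { apply Rlt_le_trans with (eps * (y ^ 2 / 2)); [| apply Rmult_le_compat_l; lra].
    replace 1 with (eps * (2 / eps) / 2) by (field; lra). nra. }
  nra.
Qed.

Lemma Phi0_cvg_m_infty : filterlim Phi0 (Rbar_locally m_infty) (locally (- (1 / 2))).
Proof.
  apply (filterlim_locally (T := R_UniformSpace)). intros eps.
  exists (- (1 + 2 / eps)). intros y Hy.
  assert (Heps := cond_pos eps).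
  assert (Small := gauss_small eps Heps y (Rlt_le _ _ Hy)).
  assert (Far : 0 <= - y) by (assert (0 < 2 / eps) by (apply Rdiv_lt_0_compat; lra); lra).
  assert (Tail := Phi0_tail (- y) Far).
  assert (Half := Phi0_le_half (- y)).
  rewrite Phi0_opp in Tail, Half.
  replace (gauss (- y)) with (gauss y) in Tail by (unfold gauss; do 3 f_equal; ring).
  assert (PIbig : 3 < PI) by (generalize PI2_3_2; lra).
  assert (2 * gauss y / PI < eps)
    by (apply (Rlt_div_l _ _ PI); nra).
  change (Rabs (Phi0 y - - (1 / 2)) < eps). apply Rabs_def1; lra.
Qed.

Lemma is_derive_Phi0 x : is_derive Phi0 x (/ sqrt (2 * PI) * exp (- (x ^ 2) / 2)).
Proof.
  exact (is_derive_scal gauss_int x (/ sqrt (2 * PI)) _ (is_derive_gauss_int x)).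
Qed.

Lemma Phi_Phi0 x : Phi x = 1 / 2 + Phi0 x.
Proof.
  assert (Deriv : forall y, Derive Phi0 y = / sqrt (2 * PI) * exp (- (y ^ 2) / 2))
    by (intros; apply is_derive_unique, is_derive_Phi0).
  unfold Phi. apply is_RInt_gen_unique.
  apply (is_RInt_gen_ext (Derive Phi0)).
  { apply filter_forall. intros ab z _. apply Deriv. }
  replace (1 / 2 + Phi0 x) with (Phi0 x - - (1 / 2)) by ring.
  apply is_RInt_gen_Derive.
  - apply filter_forall. intros ab z _. eexists; apply is_derive_Phi0.
  - apply filter_forall. intros ab z _.
    apply (continuous_ext (fun y => / sqrt (2 * PI) * exp (- (y ^ 2) / 2))).
    { intros; symmetry; apply Deriv. }
    apply continuous_of_ex_derive. auto_derive. exact I.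
  - apply Phi0_cvg_m_infty.
  - intros P HP. apply (locally_singleton _ _ HP).
Qed.

Lemma Phi_opp x : Phi (- x) = 1 - Phi x.
Proof. rewrite !Phi_Phi0, Phi0_opp. lra. Qed.

Lemma Phi_increment x y : x <= y -> 0 <= Phi y - Phi x <= (y - x) / sqrt (2 * PI).
Proof. intros Hxy. rewrite !Phi_Phi0. generalize (Phi0_increment x y Hxy). lra. Qed.

Lemma Phi_bounds x : 0 <= Phi x <= 1.
Proof.
  generalize (Phi0_le_half x) (Phi0_le_half (- x)). rewrite Phi_Phi0, Phi0_opp. lra.
Qed.

Lemma twice_Phi_sub1_ge t : 0 <= t <= 1 -> t ^ 2 / (1 + t ^ 2) <= 2 * Phi t - 1.
Proof.
  intros Ht. assert (Bounds := sqrt_2PI_bounds).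
  assert (Cubic := gauss_int_ge_cubic t (proj1 Ht)).
  assert (Cubic_pos : 0 <= t - t ^ 3 / 6) by nra.
  assert (Third : (t - t ^ 3 / 6) / 3 <= Phi0 t).
  { unfold Phi0. apply Rle_trans with (/ sqrt (2 * PI) * (t - t ^ 3 / 6)).
    - unfold Rdiv. rewrite Rmult_comm. apply Rmult_le_compat_r; [lra |].
      apply Rinv_le_contravar; lra.
    - apply Rmult_le_compat_l; [apply Rlt_le, Rinv_0_lt_compat |]; lra. }
  assert (Poly : t ^ 2 <= 2 * (t - t ^ 3 / 6) / 3 * (1 + t ^ 2)).
  { assert (Sq_le_1 : t ^ 2 <= 1) by nra.
    assert (t ^ 4 <= t ^ 2) by (replace (t ^ 4) with (t ^ 2 * t ^ 2) by ring; nra).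
    assert (0 <= t * (2 - 3 * t + 5 / 3 * t ^ 2 - t ^ 4 / 3)) by (apply Rmult_le_pos; nra).
    nra. }
  rewrite Phi_Phi0.
  apply Rle_trans with (2 * (t - t ^ 3 / 6) / 3); [| lra].
  apply (Rle_div_l _ _ (1 + t ^ 2)); nra.
Qed.

Lemma Phi_inv_sub_le t : 0 < t <= 1 -> Phi (/ t) - Phi t <= (1 - t ^ 2) / (1 + t ^ 2).
Proof.
  intros Ht. assert (Bounds := sqrt_2PI_bounds). assert (Sq := sqrt_2PI_sq).
  assert (PIbig : 3 < PI) by (generalize PI2_3_2; lra).
  assert (Inv_ge_1 : 1 <= / t) by (rewrite <- Rinv_1; apply Rinv_le_contravar; lra).
  assert (Denom : 0 < 1 + t ^ 2) by nra.
  destruct (Rle_lt_dec (t ^ 2) (1 / 3)) as [Small | Large].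
  - assert (Half : Phi (/ t) - Phi t <= 1 / 2).
    { generalize (Phi0_le_half (/ t)) (Phi_increment 0 t (Rlt_le _ _ (proj1 Ht))).
      rewrite !Phi_Phi0, Phi0_0. lra. }
    apply Rle_trans with (1 / 2); [exact Half |].
    apply (Rle_div_r _ _ (1 + t ^ 2)); lra.
  - destruct (Phi_increment t (/ t)) as [_ Lipschitz]; [lra |].
    apply Rle_trans with (1 := Lipschitz).
    replace (/ t - t) with ((1 - t ^ 2) / t) by (field; lra).
    (* (1 + t^2)^2 <= 6 t^2 < 2 PI t^2 when 1/3 < t^2 <= 1 *)
    assert (Key : 1 + t ^ 2 <= t * sqrt (2 * PI)).
    { assert (Sq_le_1 : t ^ 2 <= 1) by nra.
      assert (t ^ 4 - 4 * t ^ 2 + 1 <= 0)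
        by (replace (t ^ 4) with (t ^ 2 * t ^ 2) by ring; nra).
      assert ((1 + t ^ 2) ^ 2 <= (t * sqrt (2 * PI)) ^ 2) by nra.
      nra. }
    replace ((1 - t ^ 2) / t / sqrt (2 * PI)) with ((1 - t ^ 2) * / (t * sqrt (2 * PI)))
      by (field; lra).
    unfold Rdiv. apply Rmult_le_compat_l; [nra |].
    apply Rinv_le_contravar; lra.
Qed.

Lemma two_point_deviation t m x c :
  0 < t <= 1 -> m = t ^ 2 / (1 + t ^ 2) ->
  (x <= - t /\ c = 0) \/ (- t <= x <= / t /\ c = 1 - m) \/ (/ t <= x /\ c = 1) ->
  Rabs (c - Phi x) <= Phi t - m.
Proof.
  intros Ht Hm Hx.
  assert (Odds := twice_Phi_sub1_ge t ltac:(lra)). assert (Gap := Phi_inv_sub_le t Ht).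
  replace ((1 - t ^ 2) / (1 + t ^ 2)) with (1 - 2 * m) in Gap by (rewrite Hm; field; nra).
  rewrite <- Hm in Odds.
  assert (Inv_ge : t <= / t)
    by (apply Rle_trans with 1; [lra | rewrite <- Rinv_1; apply Rinv_le_contravar; lra]).
  assert (Mono : forall a b, a <= b -> Phi a <= Phi b)
    by (intros a b Hab; generalize (Phi_increment a b Hab); lra).
  assert (Opp := Phi_opp t). assert (Range := Phi_bounds x).
  assert (Mono_t := Mono t (/ t) Inv_ge).
  apply Rabs_le.
  destruct Hx as [[Hx ->] | [[[Hx1 Hx2] ->] | [Hx ->]]].
  - generalize (Mono x (- t) Hx). lra.
  - generalize (Mono (- t) x Hx1) (Mono x (/ t) Hx2). lra.
  - generalize (Mono (/ t) x Hx). lra.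
Qed.

Lemma sqrt_div_inv a b : 0 < a -> 0 < b -> sqrt (b / a) = / sqrt (a / b).
Proof. intros Ha Hb. rewrite <- sqrt_inv. f_equal. field. lra. Qed.

Lemma sqrt_div_pos a b : 0 < a -> 0 < b -> 0 < sqrt (a / b).
Proof. intros Ha Hb. apply sqrt_lt_R0, Rdiv_lt_0_compat; assumption. Qed.

Lemma sqrt_div_le_1 a b : 0 < a <= b -> sqrt (a / b) <= 1.
Proof.
  intros Hab. rewrite <- sqrt_1. apply sqrt_le_1; [apply Rlt_le, Rdiv_lt_0_compat; lra | lra |].
  apply Rle_div_l; lra.
Qed.

Lemma eq_sqrt_odds a b : 0 < a -> 0 < b -> a + b = 1 ->
  a = sqrt (a / b) ^ 2 / (1 + sqrt (a / b) ^ 2).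
Proof.
  intros Ha Hb Hab. rewrite <- Rsqr_pow2, Rsqr_sqrt by (apply Rlt_le, Rdiv_lt_0_compat; lra).
  replace b with (1 - a) by lra. field. lra.
Qed.

Lemma is_lub_approx (S : R -> Prop) v :
  (forall y, S y -> y <= v) -> (forall eps, 0 < eps -> exists y, S y /\ v - eps < y) ->
  is_lub S v.
Proof.
  intros Upper Approx. split; [exact Upper |].
  intros b Hb. apply Rnot_lt_le. intros Hbv.
  destruct (Approx (v - b)) as [y [Hy Close]]; [lra |].
  generalize (Hb y Hy). lra.
Qed.

Lemma Delta1_lub_lt_half p :
  0 < p < / 2 -> is_lub (Delta1_set p) (Phi (sqrt (p / (1 - p))) - p).
Proof.
  intros Hp.
  set (t := sqrt (p / (1 - p))).
  assert (Ht : 0 < t <= 1) by (split; [apply sqrt_div_pos | apply sqrt_div_le_1]; lra).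
  assert (Hm : p = t ^ 2 / (1 + t ^ 2)) by (apply eq_sqrt_odds; lra).
  assert (Inv : sqrt ((1 - p) / p) = / t) by (apply sqrt_div_inv; lra).
  assert (Inv_pos : 0 < / t) by (apply Rinv_0_lt_compat; lra).
  apply is_lub_approx.
  - intros y [x ->]. unfold X1_cdf_lt. cbv zeta. rewrite Inv. fold t.
    apply two_point_deviation with (1 := Ht) (2 := Hm).
    destruct (Rlt_dec (/ t) x); destruct (Rlt_dec (- t) x).
    + right; right. split; [lra | ring].
    + lra.
    + right; left. split; [lra | ring].
    + left. split; [lra | ring].
  - intros eps Heps.
    set (d := Rmin eps (t + / t)).
    assert (Hd_pos : 0 < d) by (apply Rmin_pos; lra).
    assert (Hd_eps : d <= eps) by apply Rmin_l.
    assert (Hd_atom : d <= t + / t) by apply Rmin_r.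
    exists (Rabs (X1_cdf_lt p (- t + d) - Phi (- t + d))).
    split; [exists (- t + d); reflexivity |].
    unfold X1_cdf_lt. cbv zeta. rewrite Inv. fold t.
    destruct (Rlt_dec (/ t) (- t + d)) as [Above | _]; [lra |].
    destruct (Rlt_dec (- t) (- t + d)) as [_ | Below]; [| lra].
    destruct (Phi_increment (- t) (- t + d)) as [_ Lipschitz]; [lra |].
    rewrite Phi_opp in Lipschitz.
    assert (d / sqrt (2 * PI) < eps)
      by (generalize sqrt_2PI_bounds; intros; apply Rlt_div_l; nra).
    eapply Rlt_le_trans; [| apply Rle_abs]. lra.
Qed.

Lemma Delta1_lub_ge_half p :
  / 2 <= p < 1 -> is_lub (Delta1_set p) (Phi (sqrt ((1 - p) / p)) - (1 - p)).
Proof.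
  intros Hp.
  set (t := sqrt ((1 - p) / p)).
  assert (Ht : 0 < t <= 1) by (split; [apply sqrt_div_pos | apply sqrt_div_le_1]; lra).
  assert (Hm : 1 - p = t ^ 2 / (1 + t ^ 2)) by (apply eq_sqrt_odds; lra).
  assert (Inv : sqrt (p / (1 - p)) = / t) by (apply sqrt_div_inv; lra).
  assert (Inv_pos : 0 < / t) by (apply Rinv_0_lt_compat; lra).
  apply is_lub_approx.
  - (* x -> - x maps this law to that of the case p < 1/2, with < turned into <= *)
    intros y [x ->]. unfold X1_cdf_lt. cbv zeta. rewrite Inv. fold t.
    assert (Mirror : forall c, Rabs (c - Phi x) = Rabs ((1 - c) - Phi (- x))).
    { intros c. rewrite Phi_opp, <- Rabs_Ropp. f_equal. ring. }
    rewrite Mirror. apply two_point_deviation with (1 := Ht) (2 := Hm).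
    destruct (Rlt_dec t x); destruct (Rlt_dec (- / t) x).
    + left. split; [lra | ring].
    + lra.
    + right; left. split; [lra | ring].
    + right; right. split; [lra | ring].
  - intros eps Heps.
    exists (Rabs (X1_cdf_lt p t - Phi t)).
    split; [exists t; reflexivity |].
    unfold X1_cdf_lt. cbv zeta. rewrite Inv. fold t.
    destruct (Rlt_dec t t) as [Absurd | _]; [lra |].
    destruct (Rlt_dec (- / t) t) as [_ | Absurd]; [| lra].
    assert (Odds := twice_Phi_sub1_ge t ltac:(lra)). rewrite <- Hm in Odds.
    rewrite Rabs_minus_sym, Rabs_pos_eq; lra.
Qed.

Theorem theorem2 (p : R) (hp0 : 0 < p) (hp1 : p < 1) :
  is_lub (Delta1_set p)
    (if Rlt_dec p (/ 2)
     then Phi (sqrt (p / (1 - p))) - p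
     else Phi (sqrt ((1 - p) / p)) - (1 - p)).
Proof.
  destruct (Rlt_dec p (/ 2)).
  - apply Delta1_lub_lt_half. lra.
  - apply Delta1_lub_ge_half. lra.
Qed.
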